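(* On $\mathcal A_{\mathcal G}$ the metrics $\mathrm a_{\mathcal G}$ and $\mathrm d_{\mathcal G}$ induce the same topology.
   Context: $(X,\Sigma,\mu)$ is a separable Lebesgue space with a non-atomic probability measure $\mu$. $\mathcal A$ is the group of invertible measure-preserving transformations of $X$, two transformations being identified if they agree outside a null set. Fix a countable family $\{A_i\}_{i\in\mathbb N}\subset\Sigma$ that generates $\Sigma$ and is dense in $\Sigma$ (for every $A\in\Sigma$ and $\varepsilon>0$ there is $i$ with $\mu(A_i\triangle A)<\varepsilon$). For $T,S\in\mathcal A$ put $\mathrm d(T,S)=\sum_{i}2^{-i}\big(\mu(TA_i\triangle SA_i)+\mu(T^{-1}A_i\triangle S^{-1}A_i)\big)$ and $\mathrm a(T,S)=\sum_{i,j}2^{-(i+j)}|\mu(TA_i\cap A_j)-\mu(SA_i\cap A_j)|$. $\mathcal G$ is a Hausdorff locally compact group with a countable neighborhood base. Fix an at most countable family $\{K_i\}$ of compact subsets of $\mathcal G$ with nonempty interiors whose union contains a set generating $\mathcal G$. An action of $\mathcal G$ is a family $T=\{T^g\}_{g\in\mathcal G}\subset\mathcal A$ with $T^gT^h=T^{gh}$ for all $g,h$ and such that $g\mapsto\mu(T^gA\cap B)$ is continuous for all $A,B\in\Sigma$. $\mathcal A_{\mathcal G}$ is the set of all actions; for $T,S\in\mathcal A_{\mathcal G}$, $\mathrm d_{\mathcal G}(T,S)=\sum_i 2^{-i}\sup_{g\in K_i}\mathrm d(T^g,S^g)$ and $\mathrm a_{\mathcal G}(T,S)=\sum_i 2^{-i}\sup_{g\in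 K_i}\mathrm a(T^g,S^g)$. *)

From HB Require Import structures.
From mathcomp Require Import all_boot all_order all_algebra.
From mathcomp Require Import all_classical all_reals all_analysis.
Set Implicit Arguments. Unset Strict Implicit. Unset Printing Implicit Defensive.
Import Order.TTheory GRing.Theory Num.Theory.
Import numFieldNormedType.Exports.
Local Open Scope classical_set_scope.
Local Open Scope ring_scope.

Definition symdiff {T : Type} (A B : set T) : set T := (A `\` B) `|` (B `\` A).

Section MeasureSide.
Context {d : measure_display} {X : measurableType d} {R : realType}.

Definition nonatomic (mu : set X -> \bar R) : Prop :=
  forall A : set X, measurable A -> (0 < mu A)%E ->
    exists B : set X, [/\ measurable B, B `<=` A & (0 < mu B < mu A)%E].

(** (X, Sigma, mu) is isomorphic mod 0 to ([0,1], Lebesgue): a measurable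
    point map [f] pushing [mu] to Lebesgue measure on [0,1] and inducing
    a bijection of measure algebras (every measurable set is, up to a null
    set, the preimage of a Borel set). *)
Definition lebesgue_space_iso (mu : set X -> \bar R) : Prop :=
  exists f : X -> measurableTypeR R,
    [/\ measurable_fun setT f,
        (forall B : set (measurableTypeR R), measurable B ->
           mu (f @^-1` B) = lebesgue_measure (B `&` `[0%R, 1%R]%classic)) &
        (forall A : set X, measurable A ->
           exists B : set (measurableTypeR R),
             measurable B /\ mu (symdiff A (f @^-1` B)) = 0%E)].

Definition generating_dense_family (mu : set X -> \bar R) (Afam : nat -> set X) : Prop :=
  [/\ (forall i, measurable (Afam i)),
      @measurable d X = <<s range Afam >> &
      (forall (B : set X) (eps : R), measurable B -> 0 < eps ->
         exists i, (mu (symdiff (Afam i) B) < eps%:E)%E)].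

(** [T] is (a representative of) an element of the group \mathcal A:
    an invertible bimeasurable measure-preserving transformation of X. *)
Definition is_mpt (mu : set X -> \bar R) (T : X -> X) : Prop :=
  measurable_fun setT T /\
  exists Ti : X -> X,
    [/\ measurable_fun setT Ti, cancel T Ti, cancel Ti T &
        forall A : set X, measurable A -> mu (T @^-1` A) = mu A].

Definition dmet (mu : set X -> \bar R) (Afam : nat -> set X) (T S : X -> X) : \bar R :=
  \sum_(i <oo) (((2%:R : R)^-1 ^+ i.+1)%:E *
     (mu (symdiff (T @` Afam i) (S @` Afam i)) +
      mu (symdiff (T @^-1` Afam i) (S @^-1` Afam i))))%E.

Definition amet (mu : set X -> \bar R) (Afam : nat -> set X) (T S : X -> X) : \bar R :=
  \sum_(i <oo) \sum_(j <oo)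
     (((2%:R : R)^-1 ^+ (i.+1 + j.+1))%:E *
      `| mu (T @` Afam i `&` Afam j) - mu (S @` Afam i `&` Afam j) |)%E.

End MeasureSide.

Section GroupSide.
Context {G : topologicalType}.

Definition is_topological_group (mul : G -> G -> G) (inv : G -> G) (one : G) : Prop :=
  [/\ associative mul, left_id one mul, right_id one mul,
      (forall x, mul (inv x) x = one) & (forall x, mul x (inv x) = one)] /\
  (continuous (fun p : G * G => mul p.1 p.2) /\ continuous inv).

Definition is_locally_compact : Prop :=
  forall x : G, exists C : set G, compact C /\ nbhs x C.

Definition countable_nbhs_base : Prop :=
  forall x : G, exists B : nat -> set G,
    (forall n, nbhs x (B n)) /\ (forall U, nbhs x U -> exists n, B n `<=` U).

Definition generated_subgroup (mul : G -> G -> G) (inv : G -> G) (one : G)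
    (S : set G) : set G :=
  \bigcap_(H in [set H : set G | [/\ S `<=` H, H one,
        (forall x y, H x -> H y -> H (mul x y)) & (forall x, H x -> H (inv x))]]) H.

(** membership in an at most countable index range {0,...,N-1} (N = Some n)
    or all of nat (N = None) *)
Definition in_range (N : option nat) (i : nat) : bool :=
  if N is Some n then (i < n)%N else true.

Definition good_compact_family (mul : G -> G -> G) (inv : G -> G) (one : G)
    (N : option nat) (K : nat -> set G) : Prop :=
  (forall i, in_range N i -> compact (K i) /\ (K i)° !=set0) /\
  exists S : set G, S `<=` \bigcup_(i in [set i | in_range N i]) K i /\
                    generated_subgroup mul inv one S = setT.

End GroupSide.

Definition is_action {d : measure_display} {X : measurableType d} {R : realType}
    {G : topologicalType} (mul : G -> G -> G) (mu : set X -> \bar R)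
    (T : G -> X -> X) : Prop :=
  [/\ (forall g, is_mpt mu (T g)),
      (forall g h, mu.-negligible [set x | T g (T h x) <> T (mul g h) x]) &
      (forall A B : set X, measurable A -> measurable B ->
         continuous (fun g => fine (mu (T g @` A `&` B))))].

Definition dGmet {d : measure_display} {X : measurableType d} {R : realType}
    {G : topologicalType} (mu : set X -> \bar R) (Afam : nat -> set X)
    (N : option nat) (K : nat -> set G) (T S : G -> X -> X) : \bar R :=
  \sum_(i <oo | in_range N i)
    (((2%:R : R)^-1 ^+ i.+1)%:E *
      ereal_sup [set dmet mu Afam (T g) (S g) | g in K i])%E.

Definition aGmet {d : measure_display} {X : measurableType d} {R : realType}
    {G : topologicalType} (mu : set X -> \bar R) (Afam : nat -> set X)
    (N : option nat) (K : nat -> set G) (T S : G -> X -> X) : \bar R :=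
  \sum_(i <oo | in_range N i)
    (((2%:R : R)^-1 ^+ i.+1)%:E *
      ereal_sup [set amet mu Afam (T g) (S g) | g in K i])%E.

(* Since |mu (T A ∩ B) - mu (S A ∩ B)| <= mu (T A △ S A), a_G <= d_G.
   Conversely fix T and eps. The tails of the series defining d_G are small,
   so it suffices to control mu (T^g A_i △ S^g A_i) and the same quantity
   for preimages, for i < I and g in K_1, ..., K_L. By density of the A_j,
   continuity of g |-> mu (T^g A ∩ B) and compactness of the K_k, there is M
   such that every such T^g A_i and (T^g)^-1 A_i lies within eta of some A_j
   with j < M. If a_G (T, S) is small, the finitely many numbers
   mu (S^g A_p ∩ A_q), p, q < M, are eta-close to those of T^g; as T^g and
   S^g preserve mu, this puts S^g A_i within O(eta) of T^g A_i. *)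

From HB Require Import structures.
From mathcomp Require Import all_boot all_order all_algebra.
From mathcomp Require Import all_classical all_reals all_analysis.
From mathcomp Require Import lra ring.
Set Implicit Arguments. Unset Strict Implicit. Unset Printing Implicit Defensive.
Import Order.TTheory GRing.Theory Num.Theory.
Import numFieldNormedType.Exports.
Local Open Scope classical_set_scope.
Local Open Scope ring_scope.

Lemma symdiffC (T : Type) (A B : set T) : symdiff A B = symdiff B A.
Proof. by rewrite /symdiff setUC. Qed.

Section real_measure.
Context d (X : measurableType d) (R : realType).
Variable mu : {finite_measure set X -> \bar R}.

Definition rmeasure (A : set X) : R := fine (mu A).

Local Notation m := rmeasure.

Lemma rmeasureE A : measurable A -> mu A = (m A)%:E.
Proof. by move=> mA; rewrite /m fineK // fin_num_measure. Qed.

Lemma rmeasure_ge0 A : 0 <= m A.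
Proof. by rewrite /m fine_ge0. Qed.

Lemma le_rmeasure A B : measurable A -> measurable B -> A `<=` B -> m A <= m B.
Proof. by move=> mA mB AB; rewrite -lee_fin -!rmeasureE // le_measure // inE. Qed.

Lemma rmeasureU2 A B : measurable A -> measurable B -> m (A `|` B) <= m A + m B.
Proof.
by move=> mA mB; rewrite -lee_fin EFinD -!rmeasureE ?measureU2 //; exact: measurableU.
Qed.

Lemma measurable_symdiff (A B : set X) :
  measurable A -> measurable B -> measurable (symdiff A B).
Proof. by move=> mA mB; apply: measurableU; exact: measurableD. Qed.

Lemma rmeasure_symdiffE A B : measurable A -> measurable B ->
  m (symdiff A B) = m A + m B - 2 * m (A `&` B).
Proof.
move=> mA mB.
have mD C D : measurable C -> measurable D -> m (C `\` D) = m C - m (C `&` D).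
  move=> mC mD; apply/eqP; rewrite -(@eqe R) EFinB -!rmeasureE //;
    [|exact: measurableI|exact: measurableD].
  by rewrite measureD // ltey_eq fin_num_measure.
have -> : symdiff A B = (A `\` B) `|` (B `\` A) by [].
have disj : (A `\` B) `&` (B `\` A) = set0.
  by apply/seteqP; split=> x //= [[? ?] []].
have mU : m ((A `\` B) `|` (B `\` A)) = m (A `\` B) + m (B `\` A).
  apply/eqP; rewrite -(@eqe R) EFinD -!rmeasureE ?measureU //;
    by [exact: measurableD|apply: measurableU; exact: measurableD].
by rewrite mU !mD // setIC; ring.
Qed.

Lemma rmeasure_symdiff_triangle A B C : measurable A -> measurable B ->
  measurable C -> m (symdiff A C) <= m (symdiff A B) + m (symdiff B C).
Proof.
move=> mA mB mC; have [mAB mBC] := (measurable_symdiff mA mB, measurable_symdiff mB mC).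
apply: le_trans (rmeasureU2 mAB mBC).
apply: le_rmeasure; [exact: measurable_symdiff|exact: measurableU|].
by move=> x [[Ax Cx]|[Cx Ax]]; have [Bx|Bx] := pselect (B x);
  [right; left|left; left|left; right|right; right].
Qed.

Lemma dist_rmeasureI_le_symdiff P Q B : measurable P -> measurable Q ->
  measurable B -> `|m (P `&` B) - m (Q `&` B)| <= m (symdiff P Q).
Proof.
move=> mP mQ mB.
have cover P' Q' : measurable P' -> measurable Q' ->
    m (P' `&` B) <= m (Q' `&` B) + m (symdiff P' Q').
  move=> mP' mQ'; have mQB := measurableI _ _ mQ' mB.
  apply: le_trans (rmeasureU2 mQB (measurable_symdiff mP' mQ')).
  apply: le_rmeasure; [exact: measurableI|exact/measurableU/measurable_symdiff|].
  by move=> x [Px Bx]; have [Qx|Qx] := pselect (Q' x); [left|right; left].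
have := cover _ _ mP mQ; have := cover _ _ mQ mP; rewrite symdiffC.
by rewrite ler_norml => h1 h2; apply/andP; split; lra.
Qed.

(* Triangle inequality through [B]; since [m P = m Q], the formula for
   [m (symdiff _ _)] bounds [m (symdiff B Q)] by [m (symdiff P B)] plus twice
   the gap between [m (P `&` B)] and [m (Q `&` B)]. *)
Lemma rmeasure_symdiff_lt P Q B (eta c : R) :
  measurable P -> measurable Q -> measurable B -> m P = m Q ->
  m (symdiff P B) < eta -> `|m (P `&` B) - m (Q `&` B)| < c ->
  m (symdiff P Q) < 2 * (eta + c).
Proof.
move=> mP mQ mB ePQ hPB; rewrite ltr_norml => /andP[_ hc].
have := rmeasure_symdiff_triangle mP mB mQ.
move: hPB; rewrite (symdiffC B) !rmeasure_symdiffE // ePQ; lra.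
Qed.

End real_measure.

Section measure_preserving.
Context d (X : measurableType d) (R : realType).
Variables (mu : {finite_measure set X -> \bar R}) (T : X -> X).
Hypothesis hT : is_mpt mu T.
Local Notation m := (rmeasure mu).

Lemma mpt_inj : injective T.
Proof. by case: hT => _ [Ti [_ TK _ _]]; exact: can_inj TK. Qed.

Lemma measurable_preimage_mpt A : measurable A -> measurable (T @^-1` A).
Proof. by case: hT => mT _ mA; rewrite -[_ @^-1` _]setTI; exact: mT. Qed.

Lemma measurable_image_mpt A : measurable A -> measurable (T @` A).
Proof.
case: hT => _ [Ti [mTi TK TiK _]] mA.
have -> : T @` A = Ti @^-1` A.
  apply/seteqP; split=> x /=; first by case=> y Ay <-; rewrite TK.
  by move=> Ax; exists (Ti x) => //; rewrite TiK.
by rewrite -[_ @^-1` _]setTI; exact: mTi.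
Qed.

Lemma rmeasure_preimage_mpt A : measurable A -> m (T @^-1` A) = m A.
Proof. by case: hT => _ [Ti [_ _ _ h]] mA; rewrite /rmeasure h. Qed.

Lemma image_mptK A : T @^-1` (T @` A) = A.
Proof.
apply/seteqP; split=> x /=; last by move=> Ax; exists x.
by case=> y Ay /mpt_inj <-.
Qed.

Lemma rmeasure_image_mpt A : measurable A -> m (T @` A) = m A.
Proof.
by move=> mA; rewrite -(rmeasure_preimage_mpt (measurable_image_mpt mA)) image_mptK.
Qed.

Lemma rmeasure_preimageI_mpt A B : measurable A -> measurable B ->
  m (T @^-1` A `&` B) = m (T @` B `&` A).
Proof.
move=> mA mB; have mBA : measurable (T @` B `&` A).
  by apply: measurableI => //; exact: measurable_image_mpt.
by rewrite -(rmeasure_preimage_mpt mBA) preimage_setI image_mptK setIC.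
Qed.

End measure_preserving.

Lemma nneseries_term_le (R : realType) (P : pred nat) (f : nat -> \bar R) k :
  (forall n, P n -> (0 <= f n)%E) -> P k -> (f k <= \sum_(n <oo | P n) f n)%E.
Proof.
move=> f0 Pk; rewrite (nneseriesD1 f0 Pk) leeDl //.
by apply: nneseries_ge0 => n _ /andP[Pn _]; exact: f0.
Qed.

Lemma ereal_sup_image_ge0 (R : realType) (T : Type) (K : set T) (f : T -> \bar R) :
  K !=set0 -> (forall g, (0 <= f g)%E) -> (0 <= ereal_sup (f @` K))%E.
Proof.
move=> [g Kg] f0; apply: le_trans (f0 g) _.
by apply: ereal_sup_ubound; exists g.
Qed.

Section dyadic_weights.
Variable R : realType.
Local Notation w k := ((2%:R : R)^-1 ^+ k).

Lemma halfpow_gt0 k : 0 < w k.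
Proof. by rewrite exprn_gt0 // invr_gt0. Qed.

Lemma halfpow_ge0 k : 0 <= w k.
Proof. exact/ltW/halfpow_gt0. Qed.

Lemma halfpow_le m n : (m <= n)%N -> w n <= w m.
Proof. by apply: ler_wiXn2l; rewrite ?invr_ge0 // invf_le1 //; lra. Qed.

Lemma halfpow_addn_le k p q L M : (k < L)%N -> (p < M)%N -> (q < M)%N ->
  w (L + (M + M)) <= w k.+1 * (w p.+1 * w q.+1).
Proof.
move=> kL pM qM; rewrite !exprD.
by rewrite !ler_pM ?mulr_ge0 ?halfpow_ge0 ?halfpow_le.
Qed.

Lemma exists_halfpow_le (e : R) : 0 < e -> exists n, w n <= e.
Proof.
move=> e0; have : geometric 1 (2^-1 : R) x @[x --> \oo] --> (0 : R).
  by apply: cvg_geometric; rewrite ger0_norm ?invr_ge0 // invf_lt1 //; lra.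
move/cvgrPdist_lt => /(_ e e0) [n _ /(_ n (leqnn n))].
by rewrite sub0r normrN /= mul1r ger0_norm ?halfpow_ge0 // => /ltW; exists n.
Qed.

Lemma sum_halfpowS m n : (m <= n)%N -> \sum_(m <= k < n) w k.+1 = w m - w n.
Proof.
elim: n => [|n IH]; first by rewrite leqn0 => /eqP ->; rewrite big_geq // subrr.
rewrite leq_eqVlt => /orP[/eqP ->|]; first by rewrite big_geq // subrr.
by rewrite ltnS => mn; rewrite big_nat_recr //= IH // !exprS; lra.
Qed.

Lemma weighted_nneseries_le (P : pred nat) (x : nat -> \bar R) (L : nat) (c B : R) :
  0 <= c -> 0 <= B ->
  (forall k, P k -> (0 <= x k)%E) -> (forall k, P k -> (x k <= B%:E)%E) ->
  (forall k, P k -> (k < L)%N -> (x k <= c%:E)%E) ->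
  (\sum_(k <oo | P k) ((w k.+1)%:E * x k) <= (c + B * w L)%:E)%E.
Proof.
move=> c0 B0 x0 xB xc.
pose y k := w k.+1 * c + (if (L <= k)%N then w k.+1 * B else 0).
have y0 k : 0 <= y k.
  by rewrite addr_ge0 ?mulr_ge0 ?halfpow_ge0 //; case: ifP; rewrite ?mulr_ge0 ?halfpow_ge0.
apply: lime_le.
  by apply: is_cvg_nneseries => k _ Pk; rewrite mule_ge0 ?x0 // lee_fin halfpow_ge0.
apply: nearW => n; apply: (@le_trans _ _ (\sum_(0 <= k < n) (y k)%:E)%E).
  rewrite big_mkcond /=; apply: lee_sum => k _; case: ifPn => Pk; last first.
    by rewrite lee_fin y0.
  have wk0 : (0 < (w k.+1)%:E)%E by rewrite lte_fin halfpow_gt0.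
  rewrite /y; case: (leqP L k) => Lk.
    apply: (@le_trans _ _ ((w k.+1)%:E * B%:E)%E); first by rewrite lee_pmul2l ?xB.
    by rewrite -EFinM lee_fin lerDr mulr_ge0 ?halfpow_ge0.
  apply: (@le_trans _ _ ((w k.+1)%:E * c%:E)%E); first by rewrite lee_pmul2l ?xc.
  by rewrite -EFinM lee_fin addr0.
rewrite sumEFin lee_fin big_split /= -big_distrl /= sum_halfpowS // expr0.
have tail : \sum_(0 <= k < n) (if (L <= k)%N then w k.+1 * B else 0) <= B * w L.
  rewrite -big_mkcondr -(@big_nat_widenl _ _ _ L 0) //=.
  rewrite -big_distrl /= mulrC; apply: ler_wpM2l => //.
  case: (leqP L n) => [Ln|nL]; last by rewrite big_geq ?halfpow_ge0 // ltnW.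
  by rewrite sum_halfpowS // gerBl halfpow_ge0.
apply: lerD tail.
by rewrite mulrBl mul1r gerBl mulr_ge0 ?halfpow_ge0.
Qed.

End dyadic_weights.

Lemma near_compact_cover_lt (R : realType) (G : topologicalType) (K : set G)
    (phi : nat -> G -> R) (t : nat -> R) :
  compact K -> (forall j, continuous (phi j)) ->
  (forall g, K g -> exists j, t j < phi j g) ->
  \forall J \near \oo, forall g, K g -> exists2 j, (j < J)%N & t j < phi j g.
Proof.
move=> /compact_near_coveringP cK cphi hK.
have := cK nat \oo (fun J g => exists2 j, (j < J)%N & t j < phi j g).
apply=> g /hK [j hj]; exists (phi j @^-1` [set x | t j < x], [set J | (j < J)%N]).
- split=> //=; last by exists j.+1.
  apply: open_nbhs_nbhs; split=> //.
  by move/continuousP: (cphi j); apply; exact: open_gt.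
- by move=> [g' J] /= [h1 h2]; exists j.
Qed.

Section dense_approximation.
Context d (X : measurableType d) (R : realType).
Variables (mu : {finite_measure set X -> \bar R}) (Afam : nat -> set X).
Hypothesis hA : forall i, measurable (Afam i).
Hypothesis hdense : forall (B : set X) (eps : R), measurable B -> 0 < eps ->
  exists i, (mu (symdiff (Afam i) B) < eps%:E)%E.
Local Notation m := (rmeasure mu).

(* As [m (P g)] does not depend on [g], [rmeasure_symdiffE] turns closeness of
   [P g] to [Afam j] into the open condition [t j < m (P g `&` Afam j)] on [g];
   density gives a cover of [K] by these open sets. *)
Lemma near_dense_approx (G : topologicalType) (K : set G) (P : G -> set X) (a eta : R) :
  compact K -> 0 < eta -> (forall g, measurable (P g)) -> (forall g, m (P g) = a) ->
  (forall j, continuous (fun g => m (P g `&` Afam j))) ->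
  \forall J \near \oo, forall g, K g ->
    exists2 j, (j < J)%N & m (symdiff (P g) (Afam j)) < eta.
Proof.
move=> cK eta0 mP Pa cP.
pose t j := (a + m (Afam j) - eta) / 2.
have lt_t g j : (t j < m (P g `&` Afam j)) = (m (symdiff (P g) (Afam j)) < eta).
  rewrite rmeasure_symdiffE // Pa /t ltr_pdivrMr //.
  by rewrite -[LHS]subr_gt0 -[RHS]subr_gt0; congr (0 < _); ring.
apply: filterS (@near_compact_cover_lt _ _ _ _ t cK cP _) => [J hJ g Kg|g Kg].
  by have [j jJ ltj] := hJ g Kg; exists j; rewrite // -lt_t.
have [j hj] := hdense (mP g) eta0; exists j.
have mPA := measurable_symdiff (mP g) (hA j).
by rewrite lt_t -lte_fin -(rmeasureE _ mPA) symdiffC.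
Qed.

End dense_approximation.

Section metrics.
Context d (X : measurableType d) (R : realType).
Variables (mu : probability X R) (Afam : nat -> set X).
Hypothesis hA : forall i, measurable (Afam i).
Local Notation m := (rmeasure mu).
Local Notation w k := ((2%:R : R)^-1 ^+ k).

Lemma rmeasure_le1 A : measurable A -> m A <= 1.
Proof. by move=> mA; rewrite -lee_fin -rmeasureE // probability_le1. Qed.

Lemma dmet_ge0 U V : (0 <= dmet mu Afam U V)%E.
Proof.
by apply: nneseries_ge0 => n _ _; rewrite mule_ge0 ?adde_ge0 // lee_fin halfpow_ge0.
Qed.

Lemma amet_ge0 U V : (0 <= amet mu Afam U V)%E.
Proof.
apply: nneseries_ge0 => i _ _; apply: nneseries_ge0 => j _ _.
by rewrite mule_ge0 ?lee_fin ?halfpow_ge0.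
Qed.

Variables U V : X -> X.
Hypotheses (hU : is_mpt mu U) (hV : is_mpt mu V).

Let mimg i := measurable_symdiff (measurable_image_mpt hU (hA i))
  (measurable_image_mpt hV (hA i)).
Let mpre i := measurable_symdiff (measurable_preimage_mpt hU (hA i))
  (measurable_preimage_mpt hV (hA i)).

Lemma dmet_le I (c : R) : 0 <= c ->
  (forall i, (i < I)%N -> m (symdiff (U @` Afam i) (V @` Afam i)) +
     m (symdiff (U @^-1` Afam i) (V @^-1` Afam i)) <= c) ->
  (dmet mu Afam U V <= (c + 2 * w I)%:E)%E.
Proof.
move=> c0 hc; apply: weighted_nneseries_le => //= k _;
  rewrite (rmeasureE _ (mimg k)) (rmeasureE _ (mpre k)) -EFinD lee_fin.
- by rewrite addr_ge0 ?rmeasure_ge0.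
- by rewrite lerD ?rmeasure_le1.
- exact: hc.
Qed.

Lemma dmet_le2 : (dmet mu Afam U V <= 2%:E)%E.
Proof. by apply: le_trans (dmet_le (I := 0) (lexx 0) _) _; rewrite ?add0r ?mulr1. Qed.

(* [V @` Afam i] is compared with [U @` Afam i] through a nearby [Afam j]
   (likewise for preimages, which turn into images by measure preservation). *)
Lemma dmet_le_of_approx I M (eta : R) : 0 <= eta -> (I <= M)%N ->
  (forall i, (i < I)%N ->
     exists2 j, (j < M)%N & m (symdiff (U @` Afam i) (Afam j)) < eta) ->
  (forall i, (i < I)%N ->
     exists2 j, (j < M)%N & m (symdiff (U @^-1` Afam i) (Afam j)) < eta) ->
  (forall p q, (p < M)%N -> (q < M)%N ->
     `|m (U @` Afam p `&` Afam q) - m (V @` Afam p `&` Afam q)| < eta) ->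
  (dmet mu Afam U V <= (8 * eta + 2 * w I)%:E)%E.
Proof.
move=> eta0 IM hUimg hUpre hUV; apply: dmet_le => [|i iI]; first lra.
have iM := leq_trans iI IM.
have [j jM hj] := hUimg i iI; have [j' j'M hj'] := hUpre i iI.
have img : m (symdiff (U @` Afam i) (V @` Afam i)) < 2 * (eta + eta).
  have [mUi mVi] := (measurable_image_mpt hU (hA i), measurable_image_mpt hV (hA i)).
  apply: (rmeasure_symdiff_lt mUi mVi (hA j) _ hj (hUV _ _ iM jM)).
  by rewrite !rmeasure_image_mpt.
have pre : m (symdiff (U @^-1` Afam i) (V @^-1` Afam i)) < 2 * (eta + eta).
  have [mUi mVi] := (measurable_preimage_mpt hU (hA i), measurable_preimage_mpt hV (hA i)).
  apply: (rmeasure_symdiff_lt mUi mVi (hA j') _ hj').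
    by rewrite !rmeasure_preimage_mpt.
  by rewrite !rmeasure_preimageI_mpt //; exact: hUV.
lra.
Qed.

Lemma ametE : amet mu Afam U V = (\sum_(i <oo) \sum_(j <oo)
    ((w j.+1)%:E * (w i.+1 *
      `|m (U @` Afam i `&` Afam j) - m (V @` Afam i `&` Afam j)|)%:E))%E.
Proof.
apply: eq_eseriesr => i _; apply: eq_eseriesr => j _.
have mI W : is_mpt mu W -> measurable (W @` Afam i `&` Afam j).
  by move=> hW; exact: measurableI (measurable_image_mpt hW (hA i)) (hA j).
rewrite (rmeasureE _ (mI _ hU)) (rmeasureE _ (mI _ hV)) -EFinB abse_EFin.
by rewrite -!EFinM exprD; congr (_%:E); ring.
Qed.

Lemma amet_term_le p q :
  ((w p.+1 * w q.+1 *
     `|m (U @` Afam p `&` Afam q) - m (V @` Afam p `&` Afam q)|)%:E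
    <= amet mu Afam U V)%E.
Proof.
pose F i j := ((w j.+1)%:E * (w i.+1 *
  `|m (U @` Afam i `&` Afam j) - m (V @` Afam i `&` Afam j)|)%:E)%E.
have F0 i j : (0 <= F i j)%E by rewrite /F -EFinM lee_fin !mulr_ge0 ?halfpow_ge0.
have row0 i : (0 <= \sum_(j <oo) F i j)%E by apply: nneseries_ge0 => j _ _.
rewrite ametE -/(\sum_(i <oo) \sum_(j <oo) F i j)%E.
apply: le_trans _ (nneseries_term_le (fun i (_ : xpredT i) => row0 i) (erefl : xpredT p)).
apply: le_trans _ (nneseries_term_le (fun j (_ : xpredT j) => F0 p j) (erefl : xpredT q)).
by rewrite /F -EFinM lee_fin mulrCA mulrA.
Qed.

Lemma amet_le_dmet : (amet mu Afam U V <= dmet mu Afam U V)%E.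
Proof.
rewrite ametE; apply: lee_nneseries => [i _ _|i _].
  by apply: nneseries_ge0 => j _ _; rewrite -EFinM lee_fin !mulr_ge0 ?halfpow_ge0.
rewrite (rmeasureE _ (mimg i)) (rmeasureE _ (mpre i)) -EFinD -EFinM.
pose a := w i.+1 * m (symdiff (U @` Afam i) (V @` Afam i)).
apply: (@le_trans _ _ (0 + a * w 0)%:E).
  apply: weighted_nneseries_le => // [|j _].
  - by rewrite mulr_ge0 ?halfpow_ge0 ?rmeasure_ge0.
  - rewrite lee_fin ler_wpM2l ?halfpow_ge0 //.
    exact: dist_rmeasureI_le_symdiff (measurable_image_mpt hU (hA i))
      (measurable_image_mpt hV (hA i)) (hA j).
by rewrite add0r expr0 mulr1 lee_fin ler_wpM2l ?halfpow_ge0 // lerDl rmeasure_ge0.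
Qed.

End metrics.

Section actions.
Context d (X : measurableType d) (R : realType).
Variables (mu : probability X R) (Afam : nat -> set X).
Hypothesis hA : forall i, measurable (Afam i).
Variables (G : topologicalType) (mul : G -> G -> G) (N : option nat) (K : nat -> set G).
Hypothesis hKne : forall k, in_range N k -> K k !=set0.
Local Notation m := (rmeasure mu).
Local Notation w k := ((2%:R : R)^-1 ^+ k).

Lemma action_mpt T : is_action mul mu T -> forall g, is_mpt mu (T g).
Proof. by case. Qed.

Let aGmet_term_ge0 T S k : in_range N k ->
  (0 <= (w k.+1)%:E * ereal_sup [set amet mu Afam (T g) (S g) | g in K k])%E.
Proof.
move=> Pk; apply: mule_ge0; first by rewrite lee_fin halfpow_ge0.
apply: (ereal_sup_image_ge0 (f := fun g => amet mu Afam (T g) (S g)) (hKne Pk)).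
by move=> g; exact: amet_ge0.
Qed.

Lemma aGmet_le_dGmet T S : is_action mul mu T -> is_action mul mu S ->
  (aGmet mu Afam N K T S <= dGmet mu Afam N K T S)%E.
Proof.
move=> hT hS; apply: lee_nneseries => [k _|k Pk]; first exact: aGmet_term_ge0.
rewrite lee_wpmul2l ?lee_fin ?halfpow_ge0 //; apply: ge_ereal_sup => _ [g Kg <-].
apply: le_trans (amet_le_dmet hA (action_mpt hT g) (action_mpt hS g)) _.
by apply: ereal_sup_ubound; exists g.
Qed.

Lemma aGmet_term_le T S k g p q : is_action mul mu T -> is_action mul mu S ->
  in_range N k -> K k g ->
  ((w k.+1 * (w p.+1 * w q.+1 *
     `|m (T g @` Afam p `&` Afam q) - m (S g @` Afam p `&` Afam q)|))%:E
    <= aGmet mu Afam N K T S)%E.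
Proof.
move=> hT hS Pk Kg; apply: le_trans _ (nneseries_term_le (aGmet_term_ge0 T S) Pk).
rewrite EFinM lee_wpmul2l ?lee_fin ?halfpow_ge0 //.
apply: le_trans (amet_term_le hA (action_mpt hT g) (action_mpt hS g) p q) _.
by apply: ereal_sup_ubound; exists g.
Qed.

Lemma dist_lt_of_aGmet_lt T S (eta : R) L M k g p q :
  is_action mul mu T -> is_action mul mu S ->
  (aGmet mu Afam N K T S < (eta * w (L + (M + M)))%:E)%E ->
  in_range N k -> (k < L)%N -> K k g -> (p < M)%N -> (q < M)%N ->
  `|m (T g @` Afam p `&` Afam q) - m (S g @` Afam p `&` Afam q)| < eta.
Proof.
move=> hT hS aTS Pk kL Kg pM qM.
have := le_lt_trans (aGmet_term_le p q hT hS Pk Kg) aTS.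
rewrite lte_fin => lt_x; rewrite -(ltr_pM2r (halfpow_gt0 _ (L + (M + M)))).
apply: le_lt_trans lt_x; rewrite mulrA [leRHS]mulrC ler_wpM2l ?normr_ge0 //.
exact: halfpow_addn_le.
Qed.

Hypothesis hdense : forall (B : set X) (eps : R), measurable B -> 0 < eps ->
  exists i, (mu (symdiff (Afam i) B) < eps%:E)%E.

Lemma near_action_approx T k i (eta : R) :
  is_action mul mu T -> compact (K k) -> 0 < eta ->
  \forall J \near \oo, forall g, K k g ->
    (exists2 j, (j < J)%N & m (symdiff (T g @` Afam i) (Afam j)) < eta) /\
    (exists2 j, (j < J)%N & m (symdiff (T g @^-1` Afam i) (Afam j)) < eta).
Proof.
move=> hT cK eta0; have mT := action_mpt hT.
have cT A B : measurable A -> measurable B ->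
    continuous (fun g => m (T g @` A `&` B)).
  by case: hT => _ _; apply.
have img := near_dense_approx hA hdense cK eta0
  (fun g => measurable_image_mpt (mT g) (hA i))
  (fun g => rmeasure_image_mpt (mT g) (hA i)) (fun j => cT _ _ (hA i) (hA j)).
have cpre j : continuous (fun g => m (T g @^-1` Afam i `&` Afam j)).
  under eq_fun do rewrite rmeasure_preimageI_mpt //.
  exact: cT.
have pre := near_dense_approx hA hdense cK eta0
  (fun g => measurable_preimage_mpt (mT g) (hA i))
  (fun g => rmeasure_preimage_mpt (mT g) (hA i)) cpre.
by apply: filterS2 img pre => J h1 h2 g Kg; split; [exact: h1|exact: h2].
Qed.

End actions.

Section a_controls_d.
Context d (X : measurableType d) (R : realType).
Variables (mu : probability X R) (Afam : nat -> set X).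
Hypothesis hA : forall i, measurable (Afam i).
Hypothesis hdense : forall (B : set X) (eps : R), measurable B -> 0 < eps ->
  exists i, (mu (symdiff (Afam i) B) < eps%:E)%E.
Variables (G : topologicalType) (mul : G -> G -> G) (N : option nat) (K : nat -> set G).
Hypothesis hK : forall k, in_range N k -> compact (K k) /\ K k !=set0.
Local Notation m := (rmeasure mu).
Local Notation w k := ((2%:R : R)^-1 ^+ k).

Let hKne k (Pk : in_range N k) : K k !=set0 := (hK Pk).2.

Lemma dGmet_lt_of_aGmet_lt T (eps : R) : is_action mul mu T -> 0 < eps ->
  exists2 delta : R, 0 < delta & forall S, is_action mul mu S ->
    (aGmet mu Afam N K T S < delta%:E)%E -> (dGmet mu Afam N K T S < eps%:E)%E.
Proof.
move=> hT eps0; pose eta := eps / 64.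
have eta0 : 0 < eta by rewrite /eta; lra.
have [I wI] : exists I, w I <= eps / 16 by apply: exists_halfpow_le; lra.
have [L wL] : exists L, w L <= eps / 8 by apply: exists_halfpow_le; lra.
have approx : \forall J \near \oo, forall ki : 'I_L * 'I_I, in_range N ki.1 ->
    forall g, K ki.1 g ->
    (exists2 j, (j < J)%N & m (symdiff (T g @` Afam ki.2) (Afam j)) < eta) /\
    (exists2 j, (j < J)%N & m (symdiff (T g @^-1` Afam ki.2) (Afam j)) < eta).
  apply: filter_forall => -[k i] /=.
  have [Pk|nPk] := boolP (in_range N k); last exact: nearW.
  apply: filterS (near_action_approx hA hdense i hT (hK Pk).1 eta0) => J h _.
  exact: h.
have [J0 _ hJ0] := approx; pose M := maxn I J0.
have {hJ0}hM := hJ0 M (leq_maxr _ _).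
exists (eta * w (L + (M + M))); first by rewrite mulr_gt0 ?halfpow_gt0.
move=> S hS aTS.
apply: le_lt_trans (_ : _ <= (eps / 4 + 2 * w L)%:E)%E _; last by rewrite lte_fin; lra.
apply: weighted_nneseries_le => // [|k Pk|k Pk|k Pk kL]; first by lra.
- apply: (ereal_sup_image_ge0 (f := fun g => dmet mu Afam (T g) (S g)) (hKne Pk)).
  by move=> g; exact: dmet_ge0.
- apply: ge_ereal_sup => _ [g Kg <-].
  exact (dmet_le2 hA (action_mpt hT g) (action_mpt hS g)).
apply: ge_ereal_sup => _ [g Kg <-].
have [mTg mSg] := (action_mpt hT g, action_mpt hS g).
apply: le_trans (dmet_le_of_approx hA mTg mSg (I := I) (M := M) (eta := eta) _ _ _ _ _) _.
- exact: ltW.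
- exact: leq_maxl.
- by move=> i iI; exact: ((hM (Ordinal kL, Ordinal iI)) Pk g Kg).1.
- by move=> i iI; exact: ((hM (Ordinal kL, Ordinal iI)) Pk g Kg).2.
- by move=> p q pM qM; exact (dist_lt_of_aGmet_lt hA hKne hT hS aTS Pk kL Kg pM qM).
by rewrite lee_fin /eta; lra.
Qed.

End a_controls_d.

Theorem mainTheorem8
  (d : measure_display) (X : measurableType d) (R : realType)
  (mu : probability X R) (Afam : nat -> set X)
  (G : topologicalType) (mul : G -> G -> G) (inv : G -> G) (one : G)
  (N : option nat) (K : nat -> set G) :
  nonatomic mu -> lebesgue_space_iso mu -> generating_dense_family mu Afam ->
  is_topological_group mul inv one -> hausdorff_space G ->
  @is_locally_compact G -> @countable_nbhs_base G ->
  good_compact_family mul inv one N K ->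
  (forall T : G -> X -> X, is_action mul mu T ->
     forall eps : R, 0 < eps -> exists2 delta : R, 0 < delta &
       forall S : G -> X -> X, is_action mul mu S ->
         (aGmet mu Afam N K T S < delta%:E)%E -> (dGmet mu Afam N K T S < eps%:E)%E) /\
  (forall T : G -> X -> X, is_action mul mu T ->
     forall eps : R, 0 < eps -> exists2 delta : R, 0 < delta &
       forall S : G -> X -> X, is_action mul mu S ->
         (dGmet mu Afam N K T S < delta%:E)%E -> (aGmet mu Afam N K T S < eps%:E)%E).
Proof.
move=> _ _ [hA _ hdense] _ _ _ _ [hKi _].
have hK k : in_range N k -> compact (K k) /\ K k !=set0.
  by move=> Pk; have [cK [g /interior_subset Kg]] := hKi k Pk; split; last exists g.
split=> T hT eps eps0; first exact: dGmet_lt_of_aGmet_lt.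
exists eps => // S hS.
exact: le_lt_trans (aGmet_le_dGmet hA (fun k Pk => (hK k Pk).2) hT hS).
Qed.
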